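(* Let $G = K_2 \otimes K_n$. If $n = 2$, then $G$ is disconnected. If $n \geq 3$, then $\dim(G) = n-1$.
   Context: $K_r$ is the complete graph on $r$ vertices. The tensor product $G\otimes H$ has vertex set $V(G)\times V(H)$, with $(u,v)$ adjacent to $(x,y)$ iff $ux\in E(G)$ and $vy\in E(H)$. For a connected graph and an ordered set $W=\{w_1,\dots,w_k\}$ of vertices, $r(v\mid W)=(d(v,w_1),\dots,d(v,w_k))$; $W$ is resolving if distinct vertices have distinct representations; $\dim(G)$ is the minimum size of a resolving set. *)

From mathcomp Require Import all_boot.
Set Implicit Arguments. Unset Strict Implicit. Unset Printing Implicit Defensive.

Definition complete_graph (r : nat) : rel 'I_r := fun i j => i != j.
Arguments complete_graph r : clear implicits.

Definition tensor_graph (T U : finType) (e1 : rel T) (e2 : rel U) : rel (T * U) :=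
  fun x y => e1 x.1 y.1 && e2 x.2 y.2.

Definition connected_graph (T : finType) (e : rel T) : Prop :=
  forall u v : T, connect e u v.

Definition walk (T : finType) (e : rel T) (u v : T) (k : nat) : bool :=
  [exists p : k.-tuple T, path e u p && (last u p == v)].

(* Graph distance: the least length of a u-v walk (= shortest path length).
   In a connected graph a shortest path has length < #|T|; for unreachable
   pairs the value #|T| is a junk default. *)
Definition dist (T : finType) (e : rel T) (u v : T) : nat :=
  find (walk e u v) (iota 0 #|T|).

Definition resolving (T : finType) (e : rel T) (W : {set T}) : bool :=
  [forall x : T, forall y : T,
     [forall w in W, dist e x w == dist e y w] ==> (x == y)].

Definition metric_dim (T : finType) (e : rel T) : nat :=
  #| [arg min_(W < [set: T] | resolving e W) #|W| ] |.

From mathcomp Require Import all_boot.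
Set Implicit Arguments. Unset Strict Implicit. Unset Printing Implicit Defensive.

(* In K2 (x) Kn every edge switches layers, so K2 (x) K2 is two disjoint edges,
   and for n >= 3 two distinct vertices are at distance 1, 2 or 3 according as
   they differ in both coordinates, only in the column, or only in the layer.
   A vertex (a, k) therefore sees another vertex only through its layer and
   through whether it lies in column k: the n - 1 vertices of one layer outside
   a fixed column resolve the graph, and a resolving set must meet every column
   but at most one, since two vertices of the same layer in unmet columns have
   the same distances to all of it. *)

Section Walks.

Variables (T : finType) (e : rel T).

Lemma walk0 u v : walk e u v 0 = (u == v).
Proof.
apply/existsP/idP => [[p /andP[_ /eqP <-]]|/eqP <-]; first by rewrite (tuple0 p).
by exists [tuple]; rewrite /= eqxx.
Qed.

Lemma walkS u v k : walk e u v k.+1 = [exists x, e u x && walk e x v k].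
Proof.
apply/existsP/existsP => [[p]|[x /andP[eux /existsP[p /andP[xp lastp]]]]].
  case: p / tupleP => x p /= /andP[/andP[eux xp] lastp].
  by exists x; rewrite eux; apply/existsP; exists p; rewrite xp.
by exists [tuple of x :: p]; rewrite /= eux xp.
Qed.

Lemma walk1 u v : walk e u v 1 = e u v.
Proof.
rewrite walkS; apply/existsP/idP => [[x /andP[eux]]|euv].
  by rewrite walk0 => /eqP <-.
by exists v; rewrite walk0 eqxx andbT.
Qed.

Lemma walk_connect u v k : walk e u v k -> connect e u v.
Proof. by case/existsP=> p /andP[up /eqP lastp]; apply/connectP; exists p. Qed.

Lemma dist_eq u v d : d < #|T| -> walk e u v d ->
  (forall k, k < d -> ~~ walk e u v k) -> dist e u v = d.
Proof.
move=> d_lt walk_d shorter; rewrite /dist -(subnKC (ltnW d_lt)) iotaD find_cat.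
have -> : has (walk e u v) (iota 0 d) = false.
  by apply/hasPn => k; rewrite mem_iota add0n => /andP[_ /shorter].
by rewrite size_iota add0n -[(#|T| - d)%N]prednK ?subn_gt0 //= walk_d addn0.
Qed.

Lemma dist_eq0 u v : (dist e u v == 0) = (u == v).
Proof.
have T_gt0 : 0 < #|T| by apply/card_gt0P; exists u.
apply/idP/idP => [/eqP d0|/eqP <-]; last first.
  by rewrite (@dist_eq u u 0) // walk0.
rewrite /dist in d0; have : has (walk e u v) (iota 0 #|T|).
  by apply/negPn/negP => /hasNfind; rewrite d0 size_iota => T0; rewrite -T0 in T_gt0.
by move/(nth_find 0); rewrite d0 nth_iota // walk0.
Qed.

End Walks.

Section MetricDimension.

Variables (T : finType) (e : rel T).

Lemma resolvingP (W : {set T}) :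
  reflect (forall x y, {in W, forall w, dist e x w = dist e y w} -> x = y)
          (resolving e W).
Proof.
apply: (iffP forallP) => [res x y same|res x].
  apply/eqP/(implyP (forallP (res x) y))/forallP => w.
  by apply/implyP => /same ->.
apply/forallP => y; apply/implyP => /forallP same; apply/eqP/res => w wW.
by apply/eqP; have /implyP := same w; apply.
Qed.

Lemma resolving_setT : resolving e [set: T].
Proof.
apply/resolvingP => x y /(_ y (in_setT y)) dxy.
by apply/eqP; rewrite -(dist_eq0 e) dxy dist_eq0.
Qed.

Lemma metric_dim_eq (W0 : {set T}) : resolving e W0 ->
  (forall W, resolving e W -> #|W0| <= #|W|) -> metric_dim e = #|W0|.
Proof.
move=> resW0 minW0; rewrite /metric_dim.
case: arg_minnP => [|W resW minW]; first exact: resolving_setT.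
by apply/eqP; rewrite eqn_leq minW0 // minW.
Qed.

End MetricDimension.

Lemma exists_neq2 (T : finType) (i j : T) : 2 < #|T| ->
  exists k, (k != i) && (k != j).
Proof.
move=> T_gt2; have /subsetPn[k _] : ~~ ([set: T] \subset [set i; j]).
  apply: contraL T_gt2 => /subset_leq_card; rewrite cardsT cards2 -leqNgt.
  by move/leq_trans; apply; rewrite ltnS leq_b1.
by rewrite !inE negb_or; exists k.
Qed.

Lemma ord2_eqN (a b c : 'I_2) : a != b -> (a == c) = (b != c).
Proof. by case: a b c => [[|[|//]] ?] [[|[|//]] ?] [[|[|//]] ?]. Qed.

Lemma ord2_neq_inj (a b c : 'I_2) : (a != c) = (b != c) -> a = b.
Proof.
by case: (eqVneq a b) => // ab; rewrite -(ord2_eqN c ab); case: (a == c).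
Qed.

Lemma K2K2_disconnected :
  ~ connected_graph (tensor_graph (complete_graph 2) (complete_graph 2)).
Proof.
have diag_closed : closed (tensor_graph (complete_graph 2) (complete_graph 2))
                          [pred u | u.1 == u.2].
  by case=> [[[|[|//]] ?] [[|[|//]] ?]] [[[|[|//]] ?] [[|[|//]] ?]].
by move/(_ (ord0, ord0) (ord0, ord_max))/(closed_connect diag_closed).
Qed.

Section TensorK2Kn.

Variable n : nat.
Hypothesis n_gt2 : 2 < n.

Local Notation V := ('I_2 * 'I_n)%type.
Local Notation G := (tensor_graph (complete_graph 2) (complete_graph n)).

Lemma walk_parity x y k : walk G x y k -> odd k = (x.1 != y.1).
Proof.
elim: k x => [|k IHk] x; first by rewrite walk0 => /eqP ->; rewrite eqxx.
rewrite walkS => /existsP[z /andP[/andP[xz1 _] /IHk /= ->]].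
by rewrite /complete_graph eq_sym in xz1; rewrite negbK (ord2_eqN _ xz1).
Qed.

Lemma walk_same_layer x y : x.1 = y.1 -> walk G x y 2.
Proof.
move=> xy1; have /(exists_neq2 x.2 y.2)[k /andP[kx ky]] : 2 < #|'I_n|.
  by rewrite card_ord.
rewrite walkS; apply/existsP; exists (lift x.1 ord0, k).
rewrite walk1 /tensor_graph /complete_graph /= -xy1 neq_lift eq_sym kx ky.
by rewrite eq_sym neq_lift.
Qed.

Lemma walk_same_column x y : x.1 != y.1 -> x.2 = y.2 -> walk G x y 3.
Proof.
move=> xy1 xy2; have /(exists_neq2 x.2 x.2)[k /andP[kx _]] : 2 < #|'I_n|.
  by rewrite card_ord.
rewrite walkS; apply/existsP; exists (y.1, k).
by rewrite walk_same_layer // /tensor_graph /complete_graph /= xy1 eq_sym kx.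
Qed.

Definition K2Kn_dist (x y : V) : nat :=
  if x == y then 0 else if x.1 == y.1 then 2 else if x.2 == y.2 then 3 else 1.

Lemma walk_K2Kn_dist x y : walk G x y (K2Kn_dist x y).
Proof.
rewrite /K2Kn_dist; case: eqP => [<-|_]; first by rewrite walk0.
case: eqP => [/walk_same_layer //|/eqP xy1].
case: eqP => [/(walk_same_column xy1) //|/eqP xy2].
by rewrite walk1; apply/andP.
Qed.

Lemma K2Kn_dist_min x y k : k < K2Kn_dist x y -> ~~ walk G x y k.
Proof.
rewrite /K2Kn_dist; case: eqP => // /eqP xy.
case: k => [|k]; first by rewrite walk0.
apply: contraL => walk_k; have := walk_parity walk_k.
case: (eqVneq x.1 y.1) => _; first by case: k {walk_k}.
case: (eqVneq x.2 y.2) => // xy2; case: k walk_k => [|[|//]] //.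
by rewrite walk1 /tensor_graph /complete_graph xy2 eqxx andbF.
Qed.

Lemma distE x y : dist G x y = K2Kn_dist x y.
Proof.
apply: dist_eq; [|exact: walk_K2Kn_dist|exact: K2Kn_dist_min].
apply: (@leq_trans 4); first by rewrite /K2Kn_dist; do !case: ifP.
by rewrite card_prod !card_ord (leq_mul (leqnn 2) (ltnW n_gt2)).
Qed.

Lemma connected_K2Kn : connected_graph G.
Proof. by move=> x y; apply: walk_connect (walk_K2Kn_dist x y). Qed.

Lemma odd_dist x y : odd (dist G x y) = (x.1 != y.1).
Proof. by rewrite distE; apply: walk_parity (walk_K2Kn_dist x y). Qed.

Lemma dist_column x y : (dist G x y \in [:: 0; 3]) = (x.2 == y.2).
Proof.
rewrite distE /K2Kn_dist; case: x y => [a i] [b j]; rewrite xpair_eqE /=.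
by case: (a == b); case: (i == j).
Qed.

Lemma dist_off_column a i j w : i != w.2 -> j != w.2 ->
  dist G (a, i) w = dist G (a, j) w.
Proof.
case: w => b k /= ik jk.
by rewrite !distE /K2Kn_dist !xpair_eqE /= (negbTE ik) (negbTE jk) !andbF.
Qed.

Definition row_but (a : 'I_2) (i : 'I_n) : {set V} := [set (a, j) | j in [set~ i]].

Lemma card_row_but a i : #|row_but a i| = n - 1.
Proof. by rewrite card_imset ?cardsC1 ?card_ord ?subn1 // => j k []. Qed.

Lemma resolving_row_but a i : resolving G (row_but a i).
Proof.
have row_in j : j != i -> (a, j) \in row_but a i.
  by move=> ji; apply: imset_f; rewrite !inE.
have column_eq x y : {in row_but a i, forall w, dist G x w = dist G y w} ->
    x.2 != i -> y.2 = x.2.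
  move=> same xi; apply/eqP.
  by rewrite -(dist_column y (a, x.2)) -same ?row_in // dist_column.
apply/resolvingP => x y same.
have /(exists_neq2 i i)[j /andP[ji _]] : 2 < #|'I_n| by rewrite card_ord.
have xy1 : x.1 = y.1.
  have := congr1 odd (same _ (row_in j ji)); rewrite !odd_dist /=.
  exact: ord2_neq_inj.
have xy2 : x.2 = y.2.
  case: (eqVneq x.2 i) => [xi|/(column_eq _ _ same) //].
  by case: (eqVneq y.2 i) => [->//|yi]; apply: column_eq yi => w /same ->.
by case: x y xy1 xy2 {same} => [? ?] [? ?] /= -> ->.
Qed.

Lemma resolving_card_ge W : resolving G W -> n - 1 <= #|W|.
Proof.
move=> resW; have missing_le1 : #|~: (snd @: W)| <= 1.
  apply/card_le1_eqP => i j; rewrite !inE => iW jW.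
  suff [] : ((ord0 : 'I_2), i) = (ord0, j) by [].
  apply/(resolvingP _ _ resW) => w wW.
  by apply: dist_off_column; [apply: contraNneq iW|apply: contraNneq jW];
    move=> ->; apply: imset_f.
rewrite leq_subLR (leq_trans _ (leq_add missing_le1 (leq_imset_card snd W))) //.
by rewrite addnC cardsC card_ord.
Qed.

Lemma metric_dim_K2Kn : metric_dim G = n - 1.
Proof.
pose i0 : 'I_n := Ordinal (ltnW (ltnW n_gt2)).
rewrite -(card_row_but ord0 i0); apply: metric_dim_eq.
  exact: resolving_row_but.
by move=> W resW; rewrite card_row_but; apply: resolving_card_ge.
Qed.

End TensorK2Kn.

Theorem proposition3p2 (n : nat) :
  (n = 2 -> ~ connected_graph (tensor_graph (complete_graph 2) (complete_graph n))) /\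
  (3 <= n ->
     connected_graph (tensor_graph (complete_graph 2) (complete_graph n)) /\
     metric_dim (tensor_graph (complete_graph 2) (complete_graph n)) = n - 1).
Proof.
split; first by move=> ->; exact: K2K2_disconnected.
by move=> n_gt2; split; [exact: connected_K2Kn | exact: metric_dim_K2Kn].
Qed.
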